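(* For every 2-coloring of the edges of $K_\mathbb{N}$ there exist a set $A\subseteq\mathbb{N}$, a vertex $v\in A$ and a color $c$ such that, letting $F$ be the graph on $A$ consisting of all edges of color $c$ inside $A$, every vertex of $F$ has infinite degree in $F$ and $\overline{d}(N_F(v))\ge 1/2$.
   Context: $K_{\mathbb{N}}$ is the complete graph on $\mathbb{N}=\{1,2,\dots\}$. $\overline{d}(V)=\limsup_{t\to\infty}|V\cap\{1,\dots,t\}|/t$. $N_F(v)$ is the set of neighbors of $v$ in $F$. *)

From HB Require Import structures.
From mathcomp Require Import all_boot all_order all_algebra.
From mathcomp Require Import all_classical all_reals all_analysis.
From mathcomp Require Import Rstruct.
Set Implicit Arguments. Unset Strict Implicit. Unset Printing Implicit Defensive.
Import Order.TTheory GRing.Theory Num.Theory.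

(* Vertex set of K_N is N = {1,2,...}, represented inside nat (0 is unused). *)
Definition two_coloring (col : nat -> nat -> bool) : Prop :=
  forall x y, col x y = col y x.

Definition count_upto (V : nat -> bool) (t : nat) : nat :=
  \sum_(1 <= i < t.+1) (V i : nat).

Definition upper_density (V : nat -> bool) : \bar Rdefinitions.R :=
  limn_esup (fun t : nat => (((count_upto V t)%:R / t%:R : Rdefinitions.R))%:E).

(* F = graph on A whose edges are the pairs inside A of colour c.
   N_F(v) = { u | u in A, u <> v, col v u = c } *)
Definition nbhd (col : nat -> nat -> bool) (A : nat -> bool) (c : bool) (v : nat)
  : nat -> bool :=
  fun u => [&& A u, u != v & col v u == c].

Definition infinite_degree (col : nat -> nat -> bool) (A : nat -> bool) (c : bool)
  (v : nat) : Prop :=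
  forall n : nat, exists u : nat, (n < u)%N /\ nbhd col A c v u.

(* Call a set c-good if each of its vertices has infinitely many c-neighbours
   inside it, and let the c-core be the union of all c-good sets, the largest
   c-good set.  The proof has two parts.
   - Density: the upper density is subadditive up to finite sets; hence if
     two sets eventually cover N one of them has upper density >= 1/2, and a
     lower bound on the density passes to eventual supersets.
   - Cores: every large integer lies in the c-core or in the (~~ c)-core
     (a vertex outside both cores would, by maximality of the cores, produce
     infinitely many vertices that are c-sparse, which form a (~~ c)-good
     set).  So one core has upper density >= 1/2.  If the cores differ, a
     vertex of one core outside the other is adjacent in its colour to almost
     the whole core; otherwise the two colour classes around any vertex of
     the common core cover it, and one of them is dense.
   The colour of the edge {v, u} is read as col v u throughout. *)
From HB Require Import structures.
From mathcomp Require Import all_boot all_order all_algebra.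
From mathcomp Require Import all_classical all_reals all_analysis.
From mathcomp Require Import Rstruct.
From mathcomp Require Import zify lra.
From Stdlib Require Import Classical.
Set Implicit Arguments. Unset Strict Implicit. Unset Printing Implicit Defensive.
Import Order.TTheory GRing.Theory Num.Theory.
Local Open Scope classical_set_scope.

Notation RR := Rdefinitions.R.

Lemma count_upto0 V : count_upto V 0 = 0%N.
Proof. by rewrite /count_upto big_geq. Qed.

Lemma count_uptoS V t : count_upto V t.+1 = (count_upto V t + V t.+1)%N.
Proof. by rewrite /count_upto big_nat_recr. Qed.

Lemma count_upto_full t : count_upto (fun=> true) t = t.
Proof. by elim: t => [|t IH]; rewrite ?count_upto0 // count_uptoS IH addn1. Qed.

Lemma count_upto_cover (n : nat) (X Y Z : nat -> bool) t :
  (forall i, (n < i)%N -> Z i -> X i || Y i) ->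
  (count_upto Z t <= minn n t + count_upto X t + count_upto Y t)%N.
Proof.
move=> cover; elim: t => [|t IH]; first by rewrite !count_upto0.
rewrite !count_uptoS.
have [lt_tn|le_nt] := ltnP t n.
  have -> : minn n t.+1 = (minn n t).+1 by lia.
  by case: (Z _) (X _) (Y _) => [] [] [] /=; lia.
have -> : minn n t.+1 = minn n t by lia.
by have := cover t.+1 le_nt; case: (Z _) (X _) (Y _) => [] [] [] /=; lia.
Qed.

Local Open Scope ereal_scope.

Lemma limn_esup_le_eventually (u : nat -> \bar RR) N r :
  (forall t, (N <= t)%N -> u t <= r%:E) -> limn_esup u <= r%:E.
Proof.
move=> ub; rewrite /limn_esup limf_esupE.
apply: ge_ereal_inf; exists (ereal_sup (u @` [set t | (N <= t)%N])).
  by exists [set t | (N <= t)%N] => //; exact: nbhs_infty_ge.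
by apply: ge_ereal_sup => _ [t Nt <-]; exact: ub.
Qed.

Lemma limn_esup_lt_eventually (u : nat -> \bar RR) r :
  limn_esup u < r%:E -> exists N, forall t, (N <= t)%N -> u t < r%:E.
Proof.
rewrite /limn_esup limf_esupE => /ereal_inf_lt[_ [V [N _ sub_NV] <-]] lt_sup.
exists N => t Nt; apply: le_lt_trans lt_sup.
by apply: ereal_sup_ubound; exists t => //; exact: sub_NV.
Qed.

Lemma limn_esup_ge_frequently (u : nat -> \bar RR) r :
  (forall N, exists t, (N <= t)%N /\ r%:E <= u t) -> r%:E <= limn_esup u.
Proof.
move=> freq; rewrite /limn_esup limf_esupE.
apply: le_ereal_inf_tmp => _ [V [N _ sub_NV] <-].
have [t [Nt le_rut]] := freq N.
by apply: le_ereal_sup_tmp; exists (u t) => //; exists t => //; exact: sub_NV.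
Qed.

Lemma ereal_lt_lower (l : \bar RR) (a : RR) :
  l < a%:E -> exists2 a', (a' < a)%R & l < a'%:E.
Proof.
case: l => [r| |] //= => [|_]; last by exists (a - 1)%R; [lra | exact: ltNyr].
by rewrite lte_fin => lt_ra; exists ((r + a) / 2)%R; rewrite ?lte_fin; lra.
Qed.

Lemma upper_density_cover (n : nat) (X Y Z : nat -> bool) (a b : RR) :
  (forall i, (n < i)%N -> Z i -> X i || Y i) ->
  upper_density X < a%:E -> upper_density Y < b%:E ->
  upper_density Z < (a + b)%:E.
Proof.
move=> cover /ereal_lt_lower[a' lt_a'a /limn_esup_lt_eventually[N1 ltX]].
move=> /ereal_lt_lower[b' lt_b'b /limn_esup_lt_eventually[N2 ltY]].
pose d := ((a + b - a' - b') / 2)%R.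
have d_gt0 : (0 < d)%R by rewrite /d; lra.
pose M := Num.truncn (n%:R / d)%R.
apply: (@le_lt_trans _ _ (a' + b' + d)%R%:E); last by rewrite lte_fin /d; lra.
apply: (@limn_esup_le_eventually _ (maxn (maxn N1 N2) M.+1)) => t le_t.
have := ltX t ltac:(lia); have := ltY t ltac:(lia); rewrite !lte_fin lee_fin.
have t_gt0 : (0 < t%:R :> RR)%R by rewrite ltr0n; lia.
have small_n : (n%:R / t%:R <= d :> RR)%R.
  rewrite ler_pdivrMr // mulrC -ler_pdivrMr //; apply: ltW.
  by apply: (lt_le_trans (truncnS_gt _)); rewrite -/M ler_nat; lia.
have count_le : ((count_upto Z t)%:R
    <= n%:R + (count_upto X t)%:R + (count_upto Y t)%:R :> RR)%R.
  by rewrite -!natrD ler_nat; have := @count_upto_cover n X Y Z t cover; lia.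
have : ((count_upto Z t)%:R / t%:R <= n%:R / t%:R + (count_upto X t)%:R / t%:R
   + (count_upto Y t)%:R / t%:R :> RR)%R.
  by rewrite -!mulrDl ler_pM2r // invr_gt0.
lra.
Qed.

Lemma upper_density_empty : upper_density (fun=> false) <= 0%:E.
Proof.
by apply: (@limn_esup_le_eventually _ 0) => t _; rewrite /count_upto big1 // mul0r.
Qed.

Lemma upper_density_full : 1%:E <= upper_density (fun=> true).
Proof.
apply: limn_esup_ge_frequently => N; exists N.+1; split => //.
by rewrite count_upto_full lee_fin divff // pnatr_eq0.
Qed.

Lemma upper_density_half (n : nat) (X Y : nat -> bool) :
  (forall i, (n < i)%N -> X i || Y i) ->
  (1/2 : RR)%:E <= upper_density X \/ (1/2 : RR)%:E <= upper_density Y.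
Proof.
move=> cover; have [geX|ltX] := leP (1/2 : RR)%:E (upper_density X); first by left.
have [geY|ltY] := leP (1/2 : RR)%:E (upper_density Y); first by right.
have := @upper_density_cover _ _ _ _ _ _ (fun i ni (_ : true) => cover i ni) ltX ltY.
have -> : (1/2 + 1/2 = 1 :> RR)%R by lra.
by move=> /lt_le_trans/(_ upper_density_full); rewrite ltxx.
Qed.

Lemma upper_density_ge_eventually (n : nat) (X Z : nat -> bool) (r : RR) :
  (forall i, (n < i)%N -> Z i -> X i) ->
  r%:E <= upper_density Z -> r%:E <= upper_density X.
Proof.
move=> sub geZ; have [//|/ereal_lt_lower[a' lt_a'r ltX]] := leP r%:E (upper_density X).
have lt_empty : upper_density (fun=> false) < (r - a')%:E.
  by apply: le_lt_trans upper_density_empty _; rewrite lte_fin; lra.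
have cover i (ni : (n < i)%N) (Zi : Z i) : X i || false by rewrite sub.
have := @upper_density_cover _ _ _ _ _ _ cover ltX lt_empty.
have -> : (a' + (r - a') = r)%R by lra.
by move=> /lt_le_trans/(_ geZ); rewrite ltxx.
Qed.

Section Cores.
Variable col : nat -> nat -> bool.

Definition good (c : bool) (S : nat -> bool) : Prop :=
  (forall x, S x -> (0 < x)%N) /\ (forall u, S u -> infinite_degree col S c u).

Definition core (c : bool) : nat -> bool :=
  fun x => `[< exists S, good c S /\ S x >].

Definition sparse (c : bool) (S : nat -> bool) (y : nat) : Prop :=
  exists n, forall w, (n < w)%N -> S w -> w != y -> col y w = ~~ c.

Lemma nbhd_mono c (S T : nat -> bool) u w :
  (forall x, S x -> T x) -> nbhd col S c u w -> nbhd col T c u w.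
Proof. by move=> ST /and3P[/ST Tw wu cw]; apply/and3P. Qed.

Lemma sub_core c S x : good c S -> S x -> core c x.
Proof. by move=> goodS Sx; apply/asboolP; exists S. Qed.

Lemma core_good c : good c (core c).
Proof.
split=> [x /asboolP[S [[pos _] Sx]]|u /asboolP[S [[pos deg] Su]] n].
  exact: pos.
have [w [nw Nw]] := deg u Su n; exists w; split => //.
by apply: nbhd_mono Nw => x; exact: sub_core.
Qed.

Lemma sparse_anti c (S T : nat -> bool) y :
  (forall x, S x -> T x) -> sparse c T y -> sparse c S y.
Proof. by move=> ST [n sp]; exists n => w nw /ST; exact: sp. Qed.

Lemma not_sparse_infinite_degree c S y :
  ~ sparse c S y -> infinite_degree col S c y.
Proof.
move=> not_sp n; apply: NNPP => no_nb; apply: not_sp; exists n => w nw Sw wy.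
have [//|ncol] := eqVneq (col y w) (~~ c); case: no_nb; exists w; split => //.
by apply/and3P; split => //; move: ncol; case: (col y w); case: c.
Qed.

Lemma sparse_good_opp c (S : nat -> bool) :
  (forall x, S x -> (0 < x)%N) -> (forall N, exists x, (N < x)%N /\ S x) ->
  (forall y, S y -> sparse c S y) -> good (~~ c) S.
Proof.
move=> pos inf sp; split => // y Sy m; have [n sp_y] := sp y Sy.
have [x [lt_x Sx]] := inf (maxn (maxn n m) y).
exists x; split; first lia.
have xy : x != y by apply/eqP; lia.
by apply/and3P; split => //; rewrite (sp_y x) //; lia.
Qed.

(* A nonempty set Y of positive integers disjoint from the c-core contains a
   vertex which is c-sparse in Y together with the core: otherwise Y and
   the core would form a c-good set, contradicting maximality of the core. *)
Lemma sparse_vertex c (Y : nat -> bool) y0 :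
  (forall y, Y y -> (0 < y)%N) -> Y y0 -> (forall y, Y y -> ~~ core c y) ->
  exists2 y, Y y & sparse c (fun w => Y w || core c w) y.
Proof.
move=> pos Yy0 disj; apply: NNPP => no_sp.
have goodYK : good c (fun w => Y w || core c w).
  split=> [x /orP[/pos //|]|u /orP[Yu|Ku]]; first exact: (core_good c).1.
    by apply: not_sparse_infinite_degree => sp_u; apply: no_sp; exists u.
  move=> n; have [w [nw Nw]] := (core_good c).2 u Ku n; exists w; split => //.
  by apply: nbhd_mono Nw => x ->; rewrite orbT.
by have := disj y0 Yy0; rewrite (sub_core goodYK) //= Yy0.
Qed.

Lemma cores_cofinite c :
  exists N, forall x, (N < x)%N -> core c x || core (~~ c) x.
Proof.
apply: NNPP => not_cof.
pose Q x := [&& (0 < x)%N, ~~ core c x & ~~ core (~~ c) x].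
have Q_inf N : exists x, (N < x)%N /\ Q x.
  apply: NNPP => no_x; apply: not_cof; exists N => x Nx.
  apply: contraT => out; case: no_x; exists x; split => //.
  by rewrite /Q -negb_or out; lia.
(* The vertices of Q that are c-sparse in Q together with the c-core are
   finitely many, since otherwise they would form a (~~ c)-good set. *)
pose Qs x := Q x && `[< sparse c (fun w => Q w || core c w) x >].
have [M Qs_bounded] : exists M, forall x, (M < x)%N -> ~~ Qs x.
  apply: NNPP => Qs_unb.
  have Qs_inf N : exists x, (N < x)%N /\ Qs x.
    apply: NNPP => no_x; apply: Qs_unb; exists N => x Nx.
    by apply/negP => Qsx; apply: no_x; exists x.
  have goodQs : good (~~ c) Qs.
    apply: sparse_good_opp => // [x /andP[/and3P[]]//|y /andP[_ /asboolP]].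
    by apply: sparse_anti => x /andP[->].
  have [x [_ Qsx]] := Qs_inf 0%N.
  by move: (Qsx) => /andP[/and3P[_ _ /negP[]]]; exact: sub_core goodQs Qsx.
(* A c-sparse vertex of Q beyond M, given by maximality of the c-core,
   contradicts the choice of M. *)
pose Y x := Q x && (M < x)%N.
have [x0 [Mx0 Qx0]] := Q_inf M.
have Ypos z : Y z -> (0 < z)%N by case/andP=> /and3P[].
have Ydisj z : Y z -> ~~ core c z by case/andP=> /and3P[].
have Yx0 : Y x0 by rewrite /Y Qx0.
have [y /andP[Qy My] [n sp_y]] := sparse_vertex Ypos Yx0 Ydisj.
have /negP[] := Qs_bounded y My; rewrite /Qs Qy; apply/asboolP.
exists (maxn n M) => w lt_w QKw wy; apply: sp_y => //; first lia.
by case/orP: QKw => [Qw|->]; rewrite ?orbT // /Y Qw /=; lia.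
Qed.

Lemma core_dominating_vertex d y0 :
  core d y0 -> ~~ core (~~ d) y0 ->
  exists2 v, core d v &
    exists n, forall w, (n < w)%N -> core d w -> nbhd col (core d) d v w.
Proof.
move=> Ky0 nKy0.
pose Y x := core d x && ~~ core (~~ d) x.
have Ypos x : Y x -> (0 < x)%N by case/andP=> /(core_good d).1.
have Ydisj x : Y x -> ~~ core (~~ d) x by case/andP.
have Yy0 : Y y0 by rewrite /Y Ky0.
have [y /andP[Ky nKy] [n sp_y]] := sparse_vertex Ypos Yy0 Ydisj.
exists y => //; exists (maxn n y) => w lt_w Kw.
have wy : w != y by apply/eqP; lia.
have YKw : Y w || core (~~ d) w by rewrite /Y Kw; case: (core (~~ d) w).
have cyw : col y w = ~~ ~~ d by apply: sp_y => //; lia.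
by apply/and3P; split => //; rewrite cyw negbK.
Qed.

End Cores.

Definition dense_witness col (A : nat -> bool) (v : nat) (c : bool) : Prop :=
  good col c A /\ A v /\ (1/2 : RR)%:E <= upper_density (nbhd col A c v).

(* If the c-core has upper density at least 1/2, a dense witness exists:
   either some core contains a vertex dominating the c-core in its colour,
   or the two cores coincide and one of the two colour classes around any
   of their vertices has upper density at least 1/2. *)
Lemma dense_core_witness col c N0 :
  (forall x, (N0 < x)%N -> core col c x || core col (~~ c) x) ->
  (1/2 : RR)%:E <= upper_density (core col c) ->
  exists A v d, dense_witness col A v d.
Proof.
move=> cof dense; pose K := core col c; pose K' := core col (~~ c).
have from_dominating d : (forall x, K x -> core col d x) ->
    (exists y, core col d y && ~~ core col (~~ d) y) ->
    exists A v e, dense_witness col A v e.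
  move=> KKd [y0 /andP[Ky0 nKy0]].
  have [v Kv [n dom]] := core_dominating_vertex Ky0 nKy0.
  exists (core col d), v, d; split; first exact: core_good.
  split=> //; apply: (upper_density_ge_eventually (n := n)) dense => w nw Kw.
  exact: dom (KKd _ Kw).
have [exK|noK] := pselect (exists y, K y && ~~ K' y).
  exact: (from_dominating c (fun x Kx => Kx) exK).
have KK' x : K x -> K' x.
  by move=> Kx; apply: contraT => nK'x; case: noK; exists x; rewrite Kx.
have [exK'|noK'] := pselect (exists y, K' y && ~~ core col (~~ ~~ c) y).
  exact: (from_dominating (~~ c) KK' exK').
have K'K x : K' x -> K x.
  move=> K'x; apply: contraT => nKx; case: noK'; exists x.
  by rewrite K'x negbK.
pose v := N0.+1.
have K_above x : (N0 < x)%N -> K x by move=> /cof/orP[// | /K'K].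
have cover i : (maxn N0 v < i)%N -> nbhd col K c v i || nbhd col K' (~~ c) v i.
  move=> lt_i; have Ki := K_above i ltac:(lia).
  have iv : i != v by apply/eqP; lia.
  by rewrite /nbhd Ki (KK' _ Ki) iv /=; case: (col v i); case: (c).
have [dense_c|dense_nc] := upper_density_half cover.
- exists K, v, c; split; first exact: core_good.
  by split=> //; apply: K_above.
- exists K', v, (~~ c); split; first exact: core_good.
  by split=> //; apply/KK'/K_above.
Qed.

Theorem mainTheorem14 (col : nat -> nat -> bool) :
  two_coloring col ->
  exists (A : nat -> bool) (v : nat) (c : bool),
    (forall x, A x -> (0 < x)%N) /\
    A v /\
    (forall u, A u -> infinite_degree col A c u) /\
    (upper_density (nbhd col A c v) >= ((1 / 2 : Rdefinitions.R))%:E)%E.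
Proof.
move=> _; have [N0 cof] := cores_cofinite col true.
have [A [v [c [[pos deg] [Av dense]]]]] : exists A v c, dense_witness col A v c.
  have [dense|dense] := upper_density_half cof; first exact: dense_core_witness cof dense.
  by apply: dense_core_witness dense => x /cof; rewrite orbC.
by exists A, v, c.
Qed.
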